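(* Let $\kappa\neq0$ and let $S=\{(x(s),t,z(s)) : s,t\in\mathbb R\}\subset\mathbb R^3$ be a $\kappa$-cylindrical surface, where $(x,z,\theta)$ solves $x'=\cos\theta$, $z'=\sin\theta$, $\theta'=\kappa z$ on $\mathbb R$. Then $S$ is symmetric with respect to any vertical plane parallel to the rulings (i.e. any plane $\{x=x(s_0)\}$) passing through a point where the height function $z$ attains an extremum (i.e. where $z'(s_0)=0$, equivalently $\cos\theta(s_0)=\pm1$).
   Context: A $\kappa$-cylindrical surface ($\kappa\ne 0$ constant) is a cylindrical ruled surface in $\mathbb R^3$ that locally satisfies the capillary equation $\operatorname{div}\big(Du/\sqrt{1+|Du|^2}\big)=\kappa u$, i.e. its mean curvature equals $\kappa z/2$. Such a surface has horizontal rulings (here parallel to the $y$-axis) and can be written $(x(s),t,z(s))$ where the directrix $\alpha=(x,z)$ is parametrized by arc length, $\theta$ is the angle between $\partial/\partial x$ and $\alpha'$, and $(x,z,\theta)$ satisfies $x'=\cos\theta$, $z'=\sin\theta$, $\theta'=\kappa z$. The height $z$ is measured with respect to the horizontal plane $\Pi=\{z=0\}$. *)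

From Stdlib Require Import Reals.
Open Scope R_scope.

Definition kappa_cyl_directrix (kappa : R) (x z theta : R -> R) : Prop :=
  forall s : R,
    derivable_pt_lim x s (cos (theta s)) /\
    derivable_pt_lim z s (sin (theta s)) /\
    derivable_pt_lim theta s (kappa * z s).

Definition cyl_surface (x z : R -> R) (p : R * R * R) : Prop :=
  let '(X, Y, Z) := p in exists s t : R, X = x s /\ Y = t /\ Z = z s.

Definition reflect_x (a : R) (p : R * R * R) : R * R * R :=
  let '(X, Y, Z) := p in (2 * a - X, Y, Z).

Definition symmetric_wrt_plane_x (S : R * R * R -> Prop) (a : R) : Prop :=
  forall p, S p <-> S (reflect_x a p).

(* Reflecting a directrix in the parameter about s0 and in the angle about theta(s0),
   (x, z, theta)(s) |-> (2 x(s0) - x(2 s0 - s), z(2 s0 - s), 2 theta(s0) - theta(2 s0 - s)),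
   gives again a solution of the system as soon as sin theta(s0) = z'(s0) = 0, and it has
   the same value as the original one at s0. The right-hand side of the (z, theta) system
   is globally Lipschitz, so a Gronwall argument on the energy |(z, theta) - (z~, theta~)|^2
   shows that the two solutions coincide; hence the directrix, and with it the surface, is
   symmetric about the plane {x = x(s0)}. *)

From Stdlib Require Import Reals Lra Psatz.
Open Scope R_scope.

Lemma derivable_pt_lim_nonpos_decreasing (f f' : R -> R) :
  (forall s, derivable_pt_lim f s (f' s)) -> (forall s, f' s <= 0) -> decreasing f.
Proof.
  intros Hd Hn.
  exact (nonpos_derivative_1 f (fun s => exist _ (f' s) (Hd s)) Hn).
Qed.

Lemma derivable_pt_lim_zero_constant (f : R -> R) :
  (forall s, derivable_pt_lim f s 0) -> constant f.
Proof.
  intros Hd.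
  exact (null_derivative_1 f (fun s => exist _ 0 (Hd s)) (fun _ => eq_refl)).
Qed.

Lemma derivable_pt_lim_lipschitz (f f' : R -> R) (M : R) :
  (forall s, derivable_pt_lim f s (f' s)) -> (forall s, Rabs (f' s) <= M) ->
  forall a b, Rabs (f a - f b) <= M * Rabs (a - b).
Proof.
  intros Hd HM.
  assert (Hslope : forall a b, a <= b -> Rabs (f b - f a) <= M * (b - a)).
  { intros a b Hab.
    assert (Hup : decreasing (fun s => f s - M * s)).
    { apply (derivable_pt_lim_nonpos_decreasing _ (fun s => f' s - M * 1)).
      - intro s. apply derivable_pt_lim_minus; [apply Hd|].
        apply derivable_pt_lim_scal, derivable_pt_lim_id.
      - intro s. pose proof (Rle_abs (f' s)). pose proof (Rle_abs (- f' s)).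
        rewrite Rabs_Ropp in *. specialize (HM s). lra. }
    assert (Hlow : decreasing (fun s => - f s - M * s)).
    { apply (derivable_pt_lim_nonpos_decreasing _ (fun s => - f' s - M * 1)).
      - intro s. apply derivable_pt_lim_minus.
        + apply (derivable_pt_lim_opp f), Hd.
        + apply derivable_pt_lim_scal, derivable_pt_lim_id.
      - intro s. pose proof (Rle_abs (f' s)). pose proof (Rle_abs (- f' s)).
        rewrite Rabs_Ropp in *. specialize (HM s). lra. }
    specialize (Hup a b Hab). specialize (Hlow a b Hab). simpl in *.
    apply Rabs_le. lra. }
  intros a b. destruct (Rle_dec a b) as [Hab | Hba].
  - rewrite Rabs_minus_sym, (Rabs_minus_sym a b), (Rabs_right (b - a)) by lra.
    now apply Hslope.
  - rewrite (Rabs_right (a - b)) by lra. apply Hslope. lra.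
Qed.

Lemma Rabs_sin_sub_le (a b : R) : Rabs (sin a - sin b) <= Rabs (a - b).
Proof.
  rewrite <- (Rmult_1_l (Rabs (a - b))).
  apply (derivable_pt_lim_lipschitz sin cos 1 derivable_pt_lim_sin).
  intro s. apply Rabs_le, COS_bound.
Qed.

Lemma derivable_pt_lim_reflect (f : R -> R) (c s l : R) :
  derivable_pt_lim f (c - s) l -> derivable_pt_lim (fun u => f (c - u)) s (- l).
Proof.
  intros Hf.
  replace (- l) with (l * (0 - 1)) by ring.
  apply (derivable_pt_lim_comp (fun u => c - u) f); [|exact Hf].
  apply (derivable_pt_lim_minus (fun _ => c) (fun u => u)).
  - apply derivable_pt_lim_const.
  - apply derivable_pt_lim_id.
Qed.

Lemma derivable_pt_lim_sum_sqr (p q : R -> R) (s dp dq : R) :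
  derivable_pt_lim p s dp -> derivable_pt_lim q s dq ->
  derivable_pt_lim (fun u => p u * p u + q u * q u) s (2 * p s * dp + 2 * q s * dq).
Proof.
  intros Hp Hq.
  replace (2 * p s * dp + 2 * q s * dq)
    with ((dp * p s + p s * dp) + (dq * q s + q s * dq)) by ring.
  apply (derivable_pt_lim_plus (fun u => p u * p u) (fun u => q u * q u));
    apply derivable_pt_lim_mult; assumption.
Qed.

(* [s |-> f s * exp (- L s)] is nonincreasing and vanishes at [s0]. *)
Lemma gronwall_zero_forward (f f' : R -> R) (L s0 : R) :
  (forall s, derivable_pt_lim f s (f' s)) -> (forall s, 0 <= f s) ->
  (forall s, f' s <= L * f s) -> f s0 = 0 ->
  forall s, s0 <= s -> f s = 0.
Proof.
  intros Hd Hpos Hb H0 s Hs.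
  assert (Hdecr : decreasing (fun u => f u * exp (- L * u))).
  { apply (derivable_pt_lim_nonpos_decreasing _
             (fun u => f' u * exp (- L * u) + f u * (exp (- L * u) * (- L * 1)))).
    - intro u. apply (derivable_pt_lim_mult f (fun v => exp (- L * v))); [apply Hd|].
      apply (derivable_pt_lim_comp (fun v => - L * v) exp).
      + apply derivable_pt_lim_scal, derivable_pt_lim_id.
      + apply derivable_pt_lim_exp.
    - intro u. specialize (Hb u). pose proof (exp_pos (- L * u)). nra. }
  specialize (Hdecr s0 s Hs). simpl in Hdecr. rewrite H0 in Hdecr.
  pose proof (exp_pos (- L * s)). specialize (Hpos s). nra.
Qed.

Lemma gronwall_zero (f f' : R -> R) (L s0 : R) :
  (forall s, derivable_pt_lim f s (f' s)) -> (forall s, 0 <= f s) ->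
  (forall s, Rabs (f' s) <= L * f s) -> f s0 = 0 ->
  forall s, f s = 0.
Proof.
  intros Hd Hpos Hb H0 s. destruct (Rle_dec s0 s) as [Hs | Hs].
  - apply (gronwall_zero_forward f f' L s0); [assumption | assumption | | assumption | lra].
    intro u. eapply Rle_trans; [apply Rle_abs | apply Hb].
  - replace s with (2 * s0 - (2 * s0 - s)) by ring.
    apply (gronwall_zero_forward (fun u => f (2 * s0 - u)) (fun u => - f' (2 * s0 - u)) L s0).
    + intro u. apply derivable_pt_lim_reflect, Hd.
    + intro u. apply Hpos.
    + intro u. eapply Rle_trans; [apply Rle_abs|]. rewrite Rabs_Ropp. apply Hb.
    + replace (2 * s0 - s0) with s0 by ring. exact H0.
    + lra.
Qed.

Lemma Rabs_energy_derivative_le (k p q d : R) :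
  Rabs d <= Rabs q ->
  Rabs (2 * p * d + 2 * q * (k * p)) <= (1 + Rabs k) * (p * p + q * q).
Proof.
  intros Hd.
  assert (Hamgm : 2 * Rabs p * Rabs q <= p * p + q * q).
  { pose proof (Rsqr_abs p). pose proof (Rsqr_abs q).
    pose proof (Rle_0_sqr (Rabs p - Rabs q)). unfold Rsqr in *. nra. }
  eapply Rle_trans; [apply Rabs_triang|].
  rewrite !Rabs_mult, (Rabs_right 2) by lra.
  pose proof (Rabs_pos p). pose proof (Rabs_pos q).
  pose proof (Rabs_pos k). pose proof (Rabs_pos d).
  nra.
Qed.

Lemma kappa_cyl_directrix_reflect (kappa : R) (x z theta : R -> R) (c a t0 : R) :
  sin t0 = 0 ->
  kappa_cyl_directrix kappa x z theta ->
  kappa_cyl_directrix kappa (fun s => 2 * a - x (c - s)) (fun s => z (c - s))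
                            (fun s => 2 * t0 - theta (c - s)).
Proof.
  intros Ht0 Hd s.
  assert (Hc2 : cos (2 * t0) = 1) by (rewrite cos_2a_sin, Ht0; ring).
  assert (Hs2 : sin (2 * t0) = 0) by (rewrite sin_2a, Ht0; ring).
  destruct (Hd (c - s)) as [Hx [Hz Ht]].
  rewrite cos_minus, sin_minus, Hc2, Hs2.
  repeat split.
  - replace (1 * cos (theta (c - s)) + 0 * sin (theta (c - s)))
      with (0 - - cos (theta (c - s))) by ring.
    apply (derivable_pt_lim_minus (fun _ => 2 * a)); [apply derivable_pt_lim_const|].
    now apply derivable_pt_lim_reflect.
  - replace (0 * cos (theta (c - s)) - 1 * sin (theta (c - s)))
      with (- sin (theta (c - s))) by ring.
    now apply derivable_pt_lim_reflect.
  - replace (kappa * z (c - s)) with (0 - - (kappa * z (c - s))) by ring.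
    apply (derivable_pt_lim_minus (fun _ => 2 * t0)); [apply derivable_pt_lim_const|].
    now apply derivable_pt_lim_reflect.
Qed.

Lemma kappa_cyl_directrix_unique (kappa : R) (x1 z1 t1 x2 z2 t2 : R -> R) (s0 : R) :
  kappa_cyl_directrix kappa x1 z1 t1 -> kappa_cyl_directrix kappa x2 z2 t2 ->
  x1 s0 = x2 s0 -> z1 s0 = z2 s0 -> t1 s0 = t2 s0 ->
  forall s, x1 s = x2 s /\ z1 s = z2 s /\ t1 s = t2 s.
Proof.
  intros Hd1 Hd2 Hx0 Hz0 Ht0.
  pose (p := fun s => z1 s - z2 s).
  pose (q := fun s => t1 s - t2 s).
  assert (Henergy : forall s, p s * p s + q s * q s = 0).
  { apply (gronwall_zero _
             (fun s => 2 * p s * (sin (t1 s) - sin (t2 s)) + 2 * q s * (kappa * p s))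
             (1 + Rabs kappa) s0).
    - intro s. destruct (Hd1 s) as [_ [Hz1 Ht1]]. destruct (Hd2 s) as [_ [Hz2 Ht2]].
      apply derivable_pt_lim_sum_sqr.
      + now apply derivable_pt_lim_minus.
      + replace (kappa * p s) with (kappa * z1 s - kappa * z2 s) by (unfold p; ring).
        now apply derivable_pt_lim_minus.
    - intro s. pose proof (Rle_0_sqr (p s)). pose proof (Rle_0_sqr (q s)).
      unfold Rsqr in *. lra.
    - intro s. apply Rabs_energy_derivative_le, Rabs_sin_sub_le.
    - unfold p, q. rewrite Hz0, Ht0. ring. }
  assert (Hzt : forall s, z1 s = z2 s /\ t1 s = t2 s).
  { intro s. specialize (Henergy s).
    pose proof (Rle_0_sqr (p s)). pose proof (Rle_0_sqr (q s)).
    unfold Rsqr, p, q in *. split; nra. }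
  assert (Hx : constant (fun s => x1 s - x2 s)).
  { apply derivable_pt_lim_zero_constant. intro s.
    destruct (Hd1 s) as [Hx1 _]. destruct (Hd2 s) as [Hx2 _].
    replace 0 with (cos (t1 s) - cos (t2 s)) by (rewrite (proj2 (Hzt s)); ring).
    now apply derivable_pt_lim_minus. }
  intro s. split; [|apply Hzt].
  specialize (Hx s s0). simpl in Hx. lra.
Qed.

Lemma cyl_surface_symmetric (x z : R -> R) (a c : R) :
  (forall s, x s = 2 * a - x (c - s)) -> (forall s, z s = z (c - s)) ->
  symmetric_wrt_plane_x (cyl_surface x z) a.
Proof.
  intros Hx Hz [[X Y] Z]. simpl.
  split; intros [s [t [HX [HY HZ]]]]; exists (c - s), t.
  - rewrite (Hx s) in HX. rewrite (Hz s) in HZ. repeat split; lra.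
  - rewrite (Hx (c - s)), (Hz (c - s)). replace (c - (c - s)) with s by ring.
    repeat split; lra.
Qed.

Theorem mainTheorem2 (kappa : R) (x z theta : R -> R) (s0 : R) :
  kappa <> 0 ->
  kappa_cyl_directrix kappa x z theta ->
  derivable_pt_lim z s0 0 ->
  symmetric_wrt_plane_x (cyl_surface x z) (x s0).
Proof.
  intros _ Hd Hz0.
  assert (Hsin : sin (theta s0) = 0).
  { destruct (Hd s0) as [_ [Hz _]]. exact (uniqueness_limite z s0 _ _ Hz Hz0). }
  pose proof (kappa_cyl_directrix_reflect kappa x z theta (2 * s0) (x s0) (theta s0)
                Hsin Hd) as Hrefl.
  pose proof (kappa_cyl_directrix_unique kappa _ _ _ _ _ _ s0 Hd Hrefl) as Hsame.
  cbv beta in Hsame. replace (2 * s0 - s0) with s0 in Hsame by ring.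
  apply (cyl_surface_symmetric x z (x s0) (2 * s0)); intro s; apply Hsame; ring.
Qed.
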